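(* Let $A\in\mathbf{R}^{n\times n}$, $C_i\in\mathbf{R}^{m_i\times n}$ ($i=1,\ldots,N$), $H\in\mathbf{R}^{p\times n}$, and let $\mathcal{L}$ be the Laplacian of a directed graph $\mathbf{G}$ on $N$ nodes. Set $\bar A=I_N\otimes A$, $\bar C=\mathrm{diag}[C_1,\ldots,C_N]$, $\bar H=\mathcal{L}\otimes H$. Suppose the pair $\left(\begin{bmatrix}\bar C\\ \bar H\end{bmatrix},\bar A\right)$ is detectable. Then for every reach $\mathbf{R}_s$ of $\mathbf{G}$: (i) $\bigcap_{i\in\mathbf{R}_s}\mathcal{C}_i=\{0\}$; (ii) $\mathcal{O}_H\cap\mathcal{C}_i=\{0\}$ for all $i\in\mathbf{R}_s$. Here $\mathcal{C}_i$ is the undetectable subspace of $(C_i,A)$ and $\mathcal{O}_H=\bigcap_{l=1}^n\operatorname{Ker}(HA^{l-1})$.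
   Context: Directed graph $\mathbf{G}$ on $\{1,\ldots,N\}$ without self-loops; adjacency matrix $\mathbf{A}=[\mathbf{a}_{ij}]$ with $\mathbf{a}_{ij}=1$ if there is an edge from $j$ to $i$, else $0$; $p_i$ the in-degree of node $i$; Laplacian $\mathcal{L}=\mathrm{diag}[p_1,\ldots,p_N]-\mathbf{A}$. For a vertex $j$, the reachable subgraph $\mathbf{R}(j)$ is the set consisting of $j$ and all nodes reachable from $j$ by a directed path. A reach is a maximal reachable subgraph: $\mathbf{R}=\mathbf{R}(i)$ for some $i$ such that there is no $j\ne i$ with $\mathbf{R}(i)\subsetneq\mathbf{R}(j)$. For a square matrix $F$ with minimal polynomial $\alpha_F=\alpha_F^-\alpha_F^+$ (zeros of $\alpha_F^-$ in the open left half-plane, of $\alpha_F^+$ in the closed right half-plane), the undetectable subspace of $(G,F)$ is $\bigcap_{l=1}^n\operatorname{Ker}(GF^{l-1})\cap\operatorname{Ker}\alpha_F^+(F)$; the pair is detectable iff this subspace is $\{0\}$. *)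

From mathcomp Require Import all_boot all_algebra.
From mathcomp Require Import reals complex.
Set Implicit Arguments. Unset Strict Implicit. Unset Printing Implicit Defensive.
Import GRing.Theory Num.Theory.
Local Open Scope ring_scope.

(* A directed graph on the nodes 'I_N (nodes 1..N of the paper) is given by a
   relation e, where  e j i  means "there is an edge from j to i". *)

Definition no_self_loops N (e : rel 'I_N) := forall i, ~~ e i i.

Definition adjmx (R : nzRingType) N (e : rel 'I_N) : 'M[R]_N :=
  \matrix_(i, j) (e j i)%:R.

Definition indeg (R : nzRingType) N (e : rel 'I_N) (i : 'I_N) : R :=
  \sum_(j < N) adjmx R e i j.

Definition laplacian (R : nzRingType) N (e : rel 'I_N) : 'M[R]_N :=
  diag_mx (\row_i indeg R e i) - adjmx R e.

Definition reach_set N (e : rel 'I_N) (j : 'I_N) : {set 'I_N} :=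
  [set k | connect e j k].

Definition is_reach_root N (e : rel 'I_N) (i : 'I_N) : Prop :=
  forall j, j != i -> ~~ (reach_set e i \proper reach_set e j).

Definition minpoly_mx (K : fieldType) (n : nat) : 'M[K]_n -> {poly K} :=
  match n as k return 'M[K]_k -> {poly K} with
  | 0 => fun _ => 1
  | k.+1 => fun F => mxminpoly F
  end.

Definition croots (R : rcfType) (p : {poly R[i]}) : seq R[i] :=
  projT1 (closed_field_poly_normal p).

(* alpha_F^+ : the factor of the minimal polynomial of the real matrix F
   whose zeros are those in the closed right half-plane (computed over C). *)
Definition alpha_plus (R : rcfType) n (F : 'M[R]_n) : {poly R[i]} :=
  \prod_(z <- croots (map_poly (real_complex R) (minpoly_mx F)) | 0 <= Re z)
     ('X - z%:P).

Definition peval_mx (K : nzRingType) n (q : {poly K}) (F : 'M[K]_n) : 'M[K]_n :=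
  \sum_(k < size q) q`_k *: F ^+ k.

(* membership of x in the undetectable subspace of (G,F):
   x in  cap_{l=1}^n Ker(G F^{l-1})  cap  Ker alpha_F^+(F)
   (the last kernel is taken for the complexification of F, applied to x). *)
Definition undetectable (R : rcfType) m n (G : 'M[R]_(m, n)) (F : 'M[R]_n)
    (x : 'cV[R]_n) : Prop :=
  (forall l : 'I_n, G *m F ^+ l *m x = 0) /\
  peval_mx (alpha_plus F) (map_mx (real_complex R) F)
    *m map_mx (real_complex R) x = 0.

Definition unobservable (R : nzRingType) p n (H : 'M[R]_(p, n)) (A : 'M[R]_n)
    (x : 'cV[R]_n) : Prop :=
  forall l : 'I_n, H *m A ^+ l *m x = 0.

Definition detectable (R : rcfType) m n (G : 'M[R]_(m, n)) (F : 'M[R]_n) : Prop :=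
  forall x, undetectable G F x -> x = 0.

Definition Abar (R : nzRingType) N n (A : 'M[R]_n) : 'M[R]_(\sum_(i < N) n) :=
  \mxdiag_(i < N) A.

Definition Cbar (R : nzRingType) N n (m : 'I_N -> nat)
    (C : forall i : 'I_N, 'M[R]_(m i, n)) :
    'M[R]_(\sum_(i < N) m i, \sum_(j < N) n) :=
  \mxblock_(i < N, j < N) (if i == j then C i else 0).

Definition Hbar (R : nzRingType) N p n (L : 'M[R]_N) (H : 'M[R]_(p, n)) :
    'M[R]_(\sum_(i < N) p, \sum_(j < N) n) :=
  \mxblock_(i < N, j < N) (L i j *: H).

From mathcomp Require Import all_boot all_algebra.
From mathcomp Require Import reals complex.
Import GRing.Theory Num.Theory.
Local Open Scope ring_scope.

(* If [c] is in the kernel of the Laplacian [L] and [x] is undetectable for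
   [(C_i, A)] whenever [c_i != 0], then [c (x) x] is undetectable for the
   network pair: [(L (x) H) (I (x) A)^l (c (x) x) = Lc (x) H A^l x = 0], [Cbar]
   acts blockwise, and [I (x) A] has the minimal polynomial, hence the unstable
   factor, of [A].  Detectability then forces [x = 0].  Part (ii) takes for [c]
   the [i]-th unit vector, [H A^l x = 0] replacing [Lc = 0].  For part (i) one
   needs [c != 0] in [ker L] vanishing off the reach [R_s]: by maximality of
   [R_s], the nodes reaching [s] receive edges only from nodes reaching [s], so
   [L] is block triangular with respect to them and the rest of [R_s], and the
   diagonal block of the former has zero row sums. *)

Lemma peval_mx_horner {K : comNzRingType} {n} (F : 'M[K]_n.+1) q :
  peval_mx q F = horner_mx F q.
Proof.
rewrite /horner_mx /horner_morph horner_coef size_map_inj_poly; last 2 first.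
- by move=> a b /matrixP /(_ 0 0); rewrite !mxE eqxx !mulr1n.
- by rewrite raddf0.
by apply: eq_bigr => i _; rewrite coef_map /= -mul_scalar_mx.
Qed.

Lemma mxpow_modp_char_poly {K : fieldType} {n} (A : 'M[K]_n.+1) l :
  A ^+ l = horner_mx A ('X^l %% char_poly A).
Proof.
rewrite -[in LHS](horner_mx_X A) -rmorphXn [in LHS](divp_eq 'X^l (char_poly A)).
by rewrite rmorphD rmorphM /= Cayley_Hamilton mulr0 add0r.
Qed.

Lemma unobservable_pow {K : fieldType} {m n} {G : 'M[K]_(m, n)} {A : 'M[K]_n}
    {x : 'cV[K]_n} :
  (forall l : 'I_n, G *m A ^+ l *m x = 0) -> forall l, G *m A ^+ l *m x = 0.
Proof.
case: n A G x => [|n] A G x Gx l; first by rewrite [x]flatmx0 mulmx0.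
have size_r : (size ('X^l %% char_poly A)%R <= n.+1)%N.
  by rewrite -ltnS -(size_char_poly A) ltn_modpN0 // monic_neq0 ?char_poly_monic.
rewrite mxpow_modp_char_poly -peval_mx_horner /peval_mx mulmx_sumr mulmx_suml.
rewrite big1 // => k _; rewrite -scalemxAr -scalemxAl.
by rewrite (Gx (Ordinal (leq_trans (ltn_ord k) size_r))) scaler0.
Qed.

Lemma minpoly_mx_monic {K : fieldType} {n} (F : 'M[K]_n) : minpoly_mx F \is monic.
Proof. by case: n F => [|n] F /=; rewrite ?monic1 ?mxminpoly_monic. Qed.

Lemma peval_mx_eq0 {K : fieldType} {n} (F : 'M[K]_n) q :
  (peval_mx q F == 0) = (minpoly_mx F %| q).
Proof.
case: n F => [|n] F /=; first by rewrite dvd1p thinmx0 eqxx.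
by rewrite peval_mx_horner; apply/eqP/mxminpoly_minP.
Qed.

Section NetworkMatrices.
Context {K : comNzRingType} {N n : nat} (A : 'M[K]_n).

Lemma Abar_pow_mxcol l {k} (Y : forall i : 'I_N, 'M[K]_(n, k)) :
  Abar N A ^+ l *m \mxcol_i Y i = \mxcol_i (A ^+ l *m Y i).
Proof.
elim: l Y => [|l IHl] Y.
  by rewrite !expr0 mul1mx; apply: eq_mxcol => i; rewrite mul1mx.
rewrite exprS -mulmxE -mulmxA IHl /Abar mul_mxdiag_mxcol.
by apply: eq_mxcol => i; rewrite mulmxA mulmxE -exprS.
Qed.

Lemma peval_Abar_mxcol q {k} (Y : forall i : 'I_N, 'M[K]_(n, k)) :
  peval_mx q (Abar N A) *m \mxcol_i Y i = \mxcol_i (peval_mx q A *m Y i).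
Proof.
rewrite /peval_mx mulmx_suml (eq_bigr (fun l : 'I_(size q) =>
   \mxcol_i (q`_l *: (A ^+ l *m Y i)))); last first.
  by move=> l _; rewrite -scalemxAl Abar_pow_mxcol; apply/matrixP => u v; rewrite !mxE.
rewrite -mxcol_sum; apply: eq_mxcol => i; rewrite mulmx_suml.
by apply: eq_bigr => l _; rewrite -scalemxAl.
Qed.

Lemma peval_Abar_eq0 q (i0 : 'I_N) :
  (peval_mx q (Abar N A) == 0) = (peval_mx q A == 0).
Proof.
apply/eqP/eqP => [qAbar|qA].
  pose Y i : 'M[K]_n := if i == i0 then 1%:M else 0.
  have := peval_Abar_mxcol q Y; rewrite qAbar mul0mx.
  by move/(congr1 (fun M => submxcol M i0)); rewrite mxcolK submxcol0 /Y eqxx mulmx1.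
rewrite -[peval_mx q (Abar N A)]mulmx1 -[1%:M](submxcolK (p_ := fun _ : 'I_N => n)).
by rewrite peval_Abar_mxcol qA; under eq_mxcol do rewrite mul0mx; rewrite mxcol0.
Qed.

Lemma Cbar_mxcol (m : 'I_N -> nat) (C : forall i : 'I_N, 'M[K]_(m i, n)) {k}
    (Y : forall i : 'I_N, 'M[K]_(n, k)) :
  Cbar C *m \mxcol_i Y i = \mxcol_i (C i *m Y i).
Proof.
rewrite /Cbar mul_mxblock_mxrow; apply: eq_mxcol => i.
rewrite (bigD1 i) //= eqxx big1 ?addr0 // => j /negbTE.
by rewrite eq_sym => ->; rewrite mul0mx.
Qed.

Lemma Hbar_mxcol {p} (L : 'M[K]_N) (H : 'M[K]_(p, n)) {k}
    (Y : forall i : 'I_N, 'M[K]_(n, k)) :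
  Hbar L H *m \mxcol_i Y i = \mxcol_i (\sum_j L i j *: (H *m Y j)).
Proof.
rewrite /Hbar mul_mxblock_mxrow; apply: eq_mxcol => i.
by apply: eq_bigr => j _; rewrite scalemxAl.
Qed.

End NetworkMatrices.

Lemma map_mxcol {T T' : Type} (f : T -> T') {N n} {p_ : 'I_N -> nat}
    (Y : forall i, 'M[T]_(p_ i, n)) :
  map_mx f (\mxcol_i Y i) = \mxcol_i map_mx f (Y i).
Proof. by apply/matrixP => u v; rewrite !mxE. Qed.

Lemma map_Abar {K K' : nzRingType} (f : {additive K -> K'}) N {n} (A : 'M[K]_n) :
  map_mx f (Abar N A) = Abar N (map_mx f A).
Proof.
apply/matrixP => u v; rewrite /Abar /mxdiag /mxblock !mxE.
by case: eqP => _; rewrite ?conform_mx_id !mxE ?raddf0.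
Qed.

Lemma minpoly_Abar {K : fieldType} {N n} (A : 'M[K]_n) (i0 : 'I_N) :
  minpoly_mx (Abar N A) = minpoly_mx A.
Proof.
apply/eqP; rewrite -eqp_monic ?minpoly_mx_monic //; apply/andP; split.
  by rewrite -peval_mx_eq0 (peval_Abar_eq0 A _ i0) peval_mx_eq0.
by rewrite -peval_mx_eq0 -(peval_Abar_eq0 A _ i0) peval_mx_eq0.
Qed.

Lemma alpha_plus_Abar {R : rcfType} {N n} (A : 'M[R]_n) (i0 : 'I_N) :
  alpha_plus (Abar N A) = alpha_plus A.
Proof. by rewrite /alpha_plus (minpoly_Abar A i0). Qed.

Lemma network_detectable_kron {R : rcfType} {N n p : nat} {A : 'M[R]_n}
    {m : 'I_N -> nat} {C : forall i : 'I_N, 'M[R]_(m i, n)} {H : 'M[R]_(p, n)}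
    {L : 'M[R]_N} {c : 'cV[R]_N} {i0 : 'I_N} {x : 'cV[R]_n} :
  detectable (col_mx (Cbar C) (Hbar L H)) (Abar N A) ->
  c i0 0 != 0 ->
  (forall i, c i 0 != 0 -> undetectable (C i) A x) ->
  (forall i l, (L *m c) i 0 *: (H *m A ^+ l *m x) = 0) ->
  x = 0.
Proof.
move=> detAbar ci0 Cx Hx.
have cx0 : \mxcol_i (c i 0 *: x) = 0.
  apply: detAbar; split.
    move=> l; rewrite -mulmxA Abar_pow_mxcol mul_col_mx Cbar_mxcol Hbar_mxcol -col_mx0.
    congr col_mx; rewrite -mxcol0; apply: eq_mxcol => i.
      rewrite -scalemxAr -scalemxAr mulmxA.
      have [->|ci] := eqVneq (c i 0) 0; first by rewrite scale0r.
      by rewrite (unobservable_pow (Cx i ci).1) scaler0.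
    apply: etrans (Hx i l); rewrite mxE scaler_suml; apply: eq_bigr => j _.
    by rewrite -scalemxAr -scalemxAr scalerA mulmxA.
  rewrite (alpha_plus_Abar A i0) map_Abar map_mxcol peval_Abar_mxcol -mxcol0.
  by apply: eq_mxcol => i; rewrite map_mxZ -scalemxAr (Cx i0 ci0).2 scaler0.
move/(congr1 (fun M => submxcol M i0)): cx0; rewrite mxcolK submxcol0.
by move/eqP; rewrite scaler_eq0 (negbTE ci0) => /eqP.
Qed.

Definition supported_on {K : nzRingType} {N} (T : {set 'I_N}) (v : 'cV[K]_N) :=
  forall i, i \notin T -> v i 0 = 0.

Section BlockTriangularKernel.
Context {K : fieldType} {N : nat} {M : 'M[K]_N} {T : {set 'I_N}}.
Hypothesis M_stable : forall i j, j \in T -> i \notin T -> M i j = 0.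

Lemma supported_on_mul (v : 'cV[K]_N) :
  supported_on T v -> supported_on T (M *m v).
Proof.
move=> vT i iT; rewrite mxE big1 // => j _.
by case: (boolP (j \in T)) => jT; [rewrite M_stable ?mul0r | rewrite vT ?mulr0].
Qed.

Let P : 'M[K]_N := diag_mx (\row_i (i \in T)%:R).

Let PE (v : 'cV[K]_N) i : (P *m v) i 0 = (i \in T)%:R * v i 0.
Proof. by rewrite mul_diag_mx !mxE. Qed.

(* [G] acts as [M] on vectors supported on [T] and as the identity off [T]. *)
Let G := P *m M *m P + (1%:M - P).

Let GE (v : 'cV[K]_N) i :
  (G *m v) i 0 = (i \in T)%:R * (M *m (P *m v)) i 0 + (1 - (i \in T)%:R) * v i 0.
Proof.
rewrite mulmxDl mulmxBl mul1mx -!mulmxA [LHS]mxE [X in _ + X]mxE.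
by rewrite [X in _ + (_ + X)]mxE !PE mulrBl mul1r.
Qed.

Let G_solve {v y : 'cV[K]_N} : G *m v = y -> supported_on T y ->
  supported_on T v /\ M *m v = y.
Proof.
move=> Gv yT.
have vT : supported_on T v.
  move=> i iT; have := congr1 (fun u : 'cV[K]_N => u i 0) Gv => /=.
  by rewrite GE (negbTE iT) mul0r add0r subr0 mul1r => ->; rewrite yT.
have Pv : P *m v = v.
  apply/matrixP => i j; rewrite ord1 PE.
  by case: (boolP (i \in T)) => iT; rewrite ?mul1r // vT // mulr0.
split=> //; apply/matrixP => i j; rewrite ord1.
case: (boolP (i \in T)) => iT; last by rewrite supported_on_mul // yT.
have := congr1 (fun u : 'cV[K]_N => u i 0) Gv => /=.
by rewrite GE iT Pv mul1r subrr mul0r addr0.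
Qed.

Lemma block_triangular_kernel {b : 'cV[K]_N} :
    b != 0 -> (forall i, i \in T -> b i 0 = 0) -> supported_on T (M *m b) ->
  exists c : 'cV[K]_N,
    [/\ c != 0, M *m c = 0 & forall i, i \notin T -> b i 0 = 0 -> c i 0 = 0].
Proof.
move=> /matrix0Pn[i0 [j0 bi0]] bT MbT; rewrite ord1 in bi0.
have i0T : i0 \notin T by apply: contra bi0 => /bT ->.
have [Gu|] := boolP (G \in unitmx).
  have [t [tT Mt]] : exists t, supported_on T t /\ M *m t = M *m b.
    by exists (invmx G *m (M *m b)); apply: G_solve (mulKVmx Gu _) MbT.
  exists (b - t); split.
  - by apply: contraNneq bi0 => /matrixP/(_ i0 0); rewrite !mxE tT // subr0 => ->.
  - by rewrite mulmxBr Mt subrr.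
  - by move=> i iT bi; rewrite !mxE tT // bi subr0.
rewrite unitmxE unitfE negbK -det_tr => /det0P[v v0 vG].
have [vT Mv] : supported_on T v^T /\ M *m v^T = 0.
  by apply: G_solve => [|i _]; rewrite ?mxE // -[G]trmxK -trmx_mul vG trmx0.
by exists v^T; split; rewrite ?trmx_eq0 // => i iT _; apply: vT.
Qed.

End BlockTriangularKernel.

Section Laplacian.
Context {K : nzRingType} {N : nat} (e : rel 'I_N).
Local Notation L := (laplacian K e).

Lemma laplacianE i j : L i j = (i == j)%:R * indeg K e i - (e j i)%:R.
Proof. by rewrite /laplacian /adjmx !mxE mulr_natl. Qed.

Lemma laplacian_row_sum i : \sum_j L i j = 0.
Proof.
under eq_bigr do rewrite laplacianE.
rewrite sumrB (bigD1 i) //= eqxx mul1r big1 ?addr0 => [|j]; last first.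
  by rewrite eq_sym => /negbTE ->; rewrite mul0r.
by apply/eqP; rewrite subr_eq0 /indeg; apply/eqP/eq_bigr => j _; rewrite mxE.
Qed.

Lemma laplacian_eq0 i j : i != j -> ~~ e j i -> L i j = 0.
Proof. by move=> /negbTE ij /negbTE eji; rewrite laplacianE ij eji mul0r subr0. Qed.

End Laplacian.

Lemma reach_root_connect_sym {N} {e : rel 'I_N} {s j} :
  is_reach_root e s -> connect e j s -> connect e s j.
Proof.
move=> s_root js; apply/negPn/negP => nsj.
have js_neq : j != s by apply: contraNneq nsj => ->; rewrite connect0.
move/negP: (s_root j js_neq); apply; apply/properP; split.
  by apply/subsetP => k; rewrite !inE; apply: connect_trans.
by exists j; rewrite !inE ?connect0.
Qed.

(* [b] is the indicator of the nodes reaching [s]; nodes outside the reach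
   receive no edge from it, so only [T] needs correcting. *)
Lemma laplacian_kernel_on_reach {K : fieldType} {N} {e : rel 'I_N} {s} :
  is_reach_root e s ->
  exists c : 'cV[K]_N, [/\ c != 0, laplacian K e *m c = 0 &
    forall i, i \notin reach_set e s -> c i 0 = 0].
Proof.
move=> s_root; set L := laplacian K e.
pose T := [set j | connect e s j && ~~ connect e j s].
pose b : 'cV[K]_N := \col_j (connect e j s)%:R.
have L_stable i j : j \in T -> i \notin T -> L i j = 0.
  rewrite !inE => /andP[sj njs] iT; apply: laplacian_eq0.
    by apply: contraNneq iT => ->; rewrite sj njs.
  apply/negP => eji; move: iT; rewrite (connect_trans sj (connect1 eji)) negbK.
  by move/(connect_trans (connect1 eji)); apply/negP.
have b_neq0 : b != 0 by apply/matrix0Pn; exists s, 0; rewrite mxE connect0 oner_eq0.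
have bT j : j \in T -> b j 0 = 0 by rewrite inE mxE => /andP[_ /negbTE ->].
have Lb_sum i : (L *m b) i 0 = \sum_(j | connect e j s) L i j.
  rewrite mxE [RHS]big_mkcond; apply: eq_bigr => j _; rewrite [b j 0]mxE.
  by case: (connect e j s); rewrite ?mulr1 ?mulr0.
have LbT : supported_on T (L *m b).
  move=> i iT; rewrite Lb_sum; have [is_|nis] := boolP (connect e i s).
    rewrite -[RHS](laplacian_row_sum e i) [RHS](bigID (fun j => connect e j s)) /=.
    rewrite [X in _ = _ + X]big1 ?addr0 // => j njs; apply: laplacian_eq0.
      by apply: contraNneq njs => <-.
    by apply: contra njs => eji; apply: connect_trans (connect1 eji) is_.
  rewrite big1 // => j js; have sj := reach_root_connect_sym s_root js.
  apply: laplacian_eq0; first by apply: contraNneq nis => ->.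
  by apply/negP => eji; move: iT; rewrite inE (connect_trans sj (connect1 eji)) nis.
have [c [c_neq0 Lc cT]] := block_triangular_kernel L_stable b_neq0 bT LbT.
exists c; split=> // i; rewrite inE => nsi.
apply: cT; first by rewrite inE (negbTE nsi).
rewrite mxE; case: (boolP (connect e i s)) => // /(reach_root_connect_sym s_root).
by rewrite (negbTE nsi).
Qed.

Theorem theorem3 (R : realType) (n N p : nat) (A : 'M[R]_n)
    (m : 'I_N -> nat) (C : forall i : 'I_N, 'M[R]_(m i, n)) (H : 'M[R]_(p, n))
    (e : rel 'I_N) :
  no_self_loops e ->
  detectable (col_mx (Cbar C) (Hbar (laplacian R e) H)) (Abar N A) ->
  forall s : 'I_N, is_reach_root e s ->
    (forall x : 'cV[R]_n,
        (forall i, i \in reach_set e s -> undetectable (C i) A x) -> x = 0) /\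
    (forall i, i \in reach_set e s ->
       forall x : 'cV[R]_n, unobservable H A x -> undetectable (C i) A x -> x = 0).
Proof.
(* A self-loop at [i] adds [1] both to [p_i] and to [a_ii], so it leaves the
   Laplacian unchanged. *)
move=> _ detAbar s s_root; split=> [x Cx | i si x Ox Cx].
  have [c [c_neq0 Lc cR]] := laplacian_kernel_on_reach (K := R) s_root.
  have /matrix0Pn[i0 [j0 ci0]] := c_neq0; rewrite ord1 in ci0.
  apply: (network_detectable_kron detAbar ci0) => [i ci | i l].
    by apply: Cx; apply: contraR ci => /cR ->; rewrite eqxx.
  by rewrite Lc mxE scale0r.
have ei : (\col_j (j == i)%:R : 'cV[R]_N) i 0 != 0 by rewrite mxE eqxx oner_neq0.
apply: (network_detectable_kron detAbar ei) => [j | j l].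
  by rewrite mxE; have [-> //|] := eqVneq j i; rewrite eqxx.
by rewrite (unobservable_pow Ox) scaler0.
Qed.
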